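(* Fix $d,N\ge1$, scenarios $r^{(1)},\dots,r^{(N)}\in\mathbb{R}^d$, $\alpha\in(0,1)$, $\lambda_\mu\ge0$, $\gamma>0$, bounds $\boldsymbol{\ell}\le\boldsymbol{u}$ in $\mathbb{R}^d$, $w_{\mathrm{prev}}\in\mathbb{R}^d$ and $\tau\ge0$ such that the feasible set $\mathcal{W}=\{w\in\mathbb{R}^d:\mathbf{1}^\top w=1,\ \boldsymbol{\ell}\le w\le\boldsymbol{u},\ \|w-w_{\mathrm{prev}}\|_1\le\tau\}$ is nonempty. For $\mu\in\mathbb{R}^d$ and symmetric $\Sigma\succeq0$ define \[ F(w;\mu,\Sigma)=-\lambda_\mu\mu^\top w+\gamma\,w^\top\Sigma w+\min_{\zeta\in\mathbb{R}}\Big\{\zeta+\frac{1}{(1-\alpha)N}\sum_{i=1}^N\big(-w^\top r^{(i)}-\zeta\big)_+\Big\}, \] and let $\hat w(\mu,\Sigma)$ denote a minimizer of $F(\cdot;\mu,\Sigma)$ over $\mathcal{W}$. Let $\hat\mu\in\mathbb{R}^d$ and symmetric $\hat\Sigma\succeq\lambda_{\min}I$ with $\lambda_{\min}>0$. Then there exist constants $c_\mu,c_\Sigma\ge0$ such that for all $\delta\mu\in\mathbb{R}^d$ and all symmetric $\delta\Sigma$ with $\hat\Sigma+\delta\Sigma\succeq0$, \[ \|\hat w(\hat\mu+\delta\mu,\hat\Sigma+\delta\Sigma)-\hat w(\hat\mu,\hat\Sigma)\|_2\le\frac{c_\mu\|\delta\mu\|_2+c_\Sigma\|\delta\Sigma\|_{\mathrm{op}}}{\lambda_{\min}}.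 \]
   Context: This is the CVaR epigraph quadratic program of a portfolio allocator at level $\alpha$ (portfolio loss $-w^\top r$), with budget, box and $\ell_1$ turnover constraints; $\|\cdot\|_{\mathrm{op}}$ is the spectral norm. The constraint data $(\mathcal{W}$, scenarios, $\alpha,\lambda_\mu,\gamma)$ are held fixed while $(\mu,\Sigma)$ are perturbed. *)

From HB Require Import structures.
From mathcomp Require Import all_boot all_order all_algebra.
From mathcomp Require Import boolp classical_sets reals.
Set Implicit Arguments. Unset Strict Implicit. Unset Printing Implicit Defensive.
Import Order.TTheory GRing.Theory Num.Theory.
Local Open Scope ring_scope.
Local Open Scope classical_set_scope.

Section Defs.
Variable R : realType.

Definition dotv (d : nat) (x y : 'cV[R]_d) : R := \sum_(i < d) x i 0 * y i 0.
Definition quadf (d : nat) (S : 'M[R]_d) (w : 'cV[R]_d) : R := dotv w (S *m w).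
Definition norm2 (d : nat) (x : 'cV[R]_d) : R := Num.sqrt (dotv x x).
Definition norm1 (d : nat) (x : 'cV[R]_d) : R := \sum_(i < d) `|x i 0|.
Definition opnorm (d : nat) (A : 'M[R]_d) : R :=
  sup [set norm2 (A *m x) | x in [set x : 'cV[R]_d | norm2 x <= 1]].

Definition is_symm (d : nat) (S : 'M[R]_d) : Prop := S^T = S.
Definition psd (d : nat) (S : 'M[R]_d) : Prop := forall x : 'cV[R]_d, 0 <= quadf S x.
Definition loewner_ge_scalar (d : nat) (S : 'M[R]_d) (c : R) : Prop :=
  psd (S - c%:M).

Definition feasible (d : nat) (l u wprev : 'cV[R]_d) (tau : R) (w : 'cV[R]_d) : Prop :=
  dotv (const_mx 1) w = 1 /\
  (forall i, l i 0 <= w i 0 <= u i 0) /\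
  norm1 (w - wprev) <= tau.

Definition cvar_obj (d N : nat) (r : 'I_N -> 'cV[R]_d) (alpha : R) (w : 'cV[R]_d) (zeta : R) : R :=
  zeta + ((1 - alpha) * N%:R)^-1 * \sum_(i < N) Num.max 0 (- dotv w (r i) - zeta).
Definition cvar_term (d N : nat) (r : 'I_N -> 'cV[R]_d) (alpha : R) (w : 'cV[R]_d) : R :=
  inf [set cvar_obj r alpha w zeta | zeta in [set: R]].

Definition Fobj (d N : nat) (r : 'I_N -> 'cV[R]_d) (alpha lam_mu gamma : R)
  (mu : 'cV[R]_d) (Sigma : 'M[R]_d) (w : 'cV[R]_d) : R :=
  - lam_mu * dotv mu w + gamma * quadf Sigma w + cvar_term r alpha w.

Definition is_minimizer (d N : nat) (r : 'I_N -> 'cV[R]_d) (alpha lam_mu gamma : R)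
  (l u wprev : 'cV[R]_d) (tau : R) (mu : 'cV[R]_d) (Sigma : 'M[R]_d) (w : 'cV[R]_d) : Prop :=
  feasible l u wprev tau w /\
  forall v, feasible l u wprev tau v ->
    Fobj r alpha lam_mu gamma mu Sigma w <= Fobj r alpha lam_mu gamma mu Sigma v.

End Defs.

(* The midpoint m of the two minimizers w0, w1 is feasible, and since the CVaR term is
   midpoint convex and the quadratic term satisfies the parallelogram law,
   2 F(m) <= F(w0) + F(w1) - gamma/2 (w1 - w0)^T Sigma (w1 - w0) for each objective F.
   Testing the minimality of w0 for F0 and of w1 for F1 against m and adding, the
   curvature gamma lam_min / 2 |w1 - w0|^2 of the unperturbed problem is bounded by the
   variation of F1 - F0 between w0 and w1. That difference is linear in dmu and dSigma
   and, W being bounded, of order |w1 - w0|; dividing by |w1 - w0| gives the bound. *)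

From HB Require Import structures.
From mathcomp Require Import all_boot all_order all_algebra.
From mathcomp Require Import boolp classical_sets reals.
From mathcomp Require Import ring lra.
Set Implicit Arguments. Unset Strict Implicit.
Import Order.TTheory GRing.Theory Num.Theory.
Local Open Scope ring_scope.
Local Open Scope classical_set_scope.

Local Notation midpoint a b := (2^-1 *: (a + b)).

Section Vectors.
Variables (R : realType) (d : nat).
Implicit Types (x y z a b : 'cV[R]_d) (S A : 'M[R]_d).

Lemma dotvDl x y z : dotv (x + y) z = dotv x z + dotv y z.
Proof. by rewrite /dotv -big_split; apply: eq_bigr => i _; rewrite mxE mulrDl. Qed.

Lemma dotvDr x y z : dotv x (y + z) = dotv x y + dotv x z.
Proof. by rewrite /dotv -big_split; apply: eq_bigr => i _; rewrite mxE mulrDr. Qed.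

Lemma dotvBl x y z : dotv (x - y) z = dotv x z - dotv y z.
Proof. by rewrite /dotv -sumrB; apply: eq_bigr => i _; rewrite !mxE mulrBl. Qed.

Lemma dotvBr x y z : dotv x (y - z) = dotv x y - dotv x z.
Proof. by rewrite /dotv -sumrB; apply: eq_bigr => i _; rewrite !mxE mulrBr. Qed.

Lemma dotvZl (c : R) x y : dotv (c *: x) y = c * dotv x y.
Proof. by rewrite /dotv mulr_sumr; apply: eq_bigr => i _; rewrite mxE mulrA. Qed.

Lemma dotvZr (c : R) x y : dotv x (c *: y) = c * dotv x y.
Proof. by rewrite /dotv mulr_sumr; apply: eq_bigr => i _; rewrite mxE mulrCA. Qed.

Lemma dotvv_ge0 x : 0 <= dotv x x.
Proof. by apply: sumr_ge0 => i _; rewrite -expr2 sqr_ge0. Qed.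

Lemma norm1_ge0 x : 0 <= norm1 x.
Proof. by apply: sumr_ge0. Qed.

Lemma sqr_norm2 x : norm2 x ^+ 2 = dotv x x.
Proof. by rewrite sqr_sqrtr ?dotvv_ge0. Qed.

Lemma abs_coord_le_norm2 x i : `|x i 0| <= norm2 x.
Proof.
rewrite /norm2 -sqrtr_sqr ler_sqrt ?dotvv_ge0 // /dotv (bigD1 i) //= -expr2 lerDl.
by apply: sumr_ge0 => j _; rewrite -expr2 sqr_ge0.
Qed.

Lemma norm1_le_norm2 x : norm1 x <= d%:R * norm2 x.
Proof.
have -> : d%:R * norm2 x = \sum_(i < d) norm2 x by rewrite sumr_const card_ord mulr_natl.
by apply: ler_sum => i _; apply: abs_coord_le_norm2.
Qed.

Lemma norm2_le_norm1 x : norm2 x <= norm1 x.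
Proof.
rewrite /norm2 -(ger0_norm (norm1_ge0 x)) -sqrtr_sqr ler_sqrt ?sqr_ge0 //.
rewrite expr2 {2}/norm1 mulr_sumr; apply: ler_sum => i _.
rewrite (le_trans (ler_norm _)) // normrM ler_wpM2r // /norm1 (bigD1 i) //= lerDl.
exact: sumr_ge0.
Qed.

Lemma abs_dotv_le x y : `|dotv x y| <= norm2 x * norm1 y.
Proof.
rewrite /dotv /norm1 mulr_sumr (le_trans (ler_norm_sum _ _ _)) //.
by apply: ler_sum => i _; rewrite normrM ler_wpM2r ?abs_coord_le_norm2.
Qed.

Lemma opnorm_has_ubound A :
  has_ubound [set norm2 (A *m x) | x in [set x : 'cV[R]_d | norm2 x <= 1]].
Proof.
exists (\sum_i \sum_j `|A i j|) => _ [x /= x_le1 <-].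
apply: le_trans (norm2_le_norm1 _) _; apply: ler_sum => i _.
rewrite mxE (le_trans (ler_norm_sum _ _ _)) //; apply: ler_sum => j _.
rewrite normrM ler_piMr //.
exact: le_trans (abs_coord_le_norm2 _ _) x_le1.
Qed.

Lemma norm2_mul_le_opnorm A x : norm2 x <= 1 -> norm2 (A *m x) <= opnorm A.
Proof. by move=> x_le1; apply: ub_le_sup (opnorm_has_ubound A) _ _; exists x. Qed.

Lemma opnorm_ge0 A : 0 <= opnorm A.
Proof.
have norm2_0 : norm2 (0 : 'cV[R]_d) = 0 by rewrite /norm2 /dotv big1 ?sqrtr0 // => i _; rewrite mxE mul0r.
by rewrite -[X in X <= _]norm2_0 -(mulmx0 _ A) norm2_mul_le_opnorm ?norm2_0.
Qed.

Lemma abs_entry_le_opnorm A i j : `|A i j| <= opnorm A.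
Proof.
have norm2_delta : norm2 (delta_mx j 0 : 'cV[R]_d) <= 1.
  rewrite /norm2 /dotv (bigD1 j) //= big1 ?addr0 => [|k /negbTE kj].
    by rewrite !mxE eqxx mulr1 sqrtr1.
  by rewrite !mxE kj mul0r.
rewrite (le_trans _ (norm2_mul_le_opnorm A norm2_delta)) //.
by rewrite -colE (le_trans _ (abs_coord_le_norm2 _ i)) // mxE.
Qed.

Lemma abs_dotv_mul_le x A y : `|dotv x (A *m y)| <= norm1 x * opnorm A * norm1 y.
Proof.
rewrite /dotv /norm1 !mulr_suml (le_trans (ler_norm_sum _ _ _)) //.
apply: ler_sum => i _; rewrite normrM -mulrA ler_wpM2l // mxE mulr_sumr.
rewrite (le_trans (ler_norm_sum _ _ _)) //; apply: ler_sum => j _.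
by rewrite normrM ler_wpM2r ?abs_entry_le_opnorm.
Qed.

Lemma quadfB S1 S2 x : quadf (S1 - S2) x = quadf S1 x - quadf S2 x.
Proof. by rewrite /quadf mulmxBl dotvBr. Qed.

Lemma quadf_scalar (c : R) x : quadf c%:M x = c * dotv x x.
Proof. by rewrite /quadf mul_scalar_mx dotvZr. Qed.

Lemma quadf_midpoint S a b :
  2 * quadf S (midpoint a b) = quadf S a + quadf S b - quadf S (a - b) / 2.
Proof.
rewrite /quadf -scalemxAr mulmxDr mulmxBr dotvZl dotvZr.
by rewrite !dotvBl !dotvBr !dotvDl !dotvDr; field.
Qed.

Lemma subr_quadf S a b :
  quadf S b - quadf S a = dotv b (S *m (b - a)) + dotv (b - a) (S *m a).
Proof. by rewrite /quadf mulmxBr dotvBl !dotvBr; ring. Qed.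

Lemma abs_subr_quadf_le S a b :
  `|quadf S b - quadf S a| <= (norm1 b + norm1 a) * opnorm S * norm1 (b - a).
Proof.
rewrite subr_quadf (le_trans (ler_normD _ _)) // !mulrDl lerD ?abs_dotv_mul_le //.
by rewrite [X in _ <= X]mulrC [_ * opnorm S]mulrC mulrA abs_dotv_mul_le.
Qed.

Definition box_norm1_bound (l u : 'cV[R]_d) : R := \sum_(i < d) (`|l i 0| + `|u i 0|).

Lemma box_norm1_bound_ge0 l u : 0 <= box_norm1_bound l u.
Proof. by apply: sumr_ge0 => i _; rewrite addr_ge0. Qed.

Section Feasible.
Variables (l u wprev : 'cV[R]_d) (tau : R).

Lemma feasible_midpoint a b : feasible l u wprev tau a -> feasible l u wprev tau b ->
  feasible l u wprev tau (midpoint a b).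
Proof.
move=> [sum_a [box_a tau_a]] [sum_b [box_b tau_b]]; split.
  by rewrite dotvZr dotvDr sum_a sum_b; field.
split=> [i|].
  rewrite !mxE; have /andP[la au] := box_a i; have /andP[lb ub] := box_b i.
  by apply/andP; split; lra.
apply: le_trans (_ : (norm1 (a - wprev) + norm1 (b - wprev)) / 2 <= tau); last by lra.
rewrite /norm1 -big_split mulr_suml /=; apply: ler_sum => i _; rewrite !mxE.
rewrite (_ : _ - _ = ((a i 0 - wprev i 0) + (b i 0 - wprev i 0)) / 2); last by lra.
by rewrite normrM [`|2^-1|]ger0_norm ?invr_ge0 ?ler_wpM2r ?invr_ge0 ?ler_normD.
Qed.

Lemma feasible_norm1_le w : feasible l u wprev tau w -> norm1 w <= box_norm1_bound l u.
Proof.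
move=> [_ [box _]]; apply: ler_sum => i _; have /andP[lw wu] := box i.
have := ler_norm (u i 0); have := ler_norm (- l i 0); rewrite normrN.
have := normr_ge0 (u i 0); have := normr_ge0 (l i 0).
by case: (lerP 0 (w i 0)) => w0;
  [rewrite [`|w i 0|]ger0_norm | rewrite [`|w i 0|]ltr0_norm]; lra.
Qed.

End Feasible.

End Vectors.

Lemma max0_midpoint_le (R : realFieldType) (a b : R) :
  Num.max 0 ((a + b) / 2) <= (Num.max 0 a + Num.max 0 b) / 2.
Proof.
have max0_ge (x : R) : 0 <= Num.max 0 x /\ x <= Num.max 0 x by rewrite !le_max !lexx orbT.
have [a0 a1] := max0_ge a; have [b0 b1] := max0_ge b.
by rewrite ge_max; apply/andP; split; lra.
Qed.

Section CVaR.
Variables (R : realType) (d N : nat) (r : 'I_N -> 'cV[R]_d) (alpha : R).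
Hypotheses (N_gt0 : (0 < N)%N) (alpha_ge0 : 0 <= alpha) (alpha_lt1 : alpha < 1).
Implicit Types (w : 'cV[R]_d) (z : R).

Local Notation weight := ((1 - alpha) * N%:R)^-1.

Lemma weight_ge0 : 0 <= weight.
Proof. by rewrite invr_ge0 mulr_ge0 ?ler0n ?subr_ge0 ?ltW. Qed.

Lemma weight_mulN_ge1 : 1 <= weight * N%:R.
Proof.
rewrite invfM -mulrA mulVf ?pnatr_eq0 -?lt0n // mulr1 invf_ge1 ?subr_gt0 //.
by rewrite gerDl oppr_le0.
Qed.

Lemma cvar_obj_ge w z M : (forall i, M <= - dotv w (r i)) -> M <= cvar_obj r alpha w z.
Proof.
move=> M_le; rewrite /cvar_obj -lerBlDl.
set t := Num.max 0 (M - z).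
have t_le : t *+ N <= \sum_(i < N) Num.max 0 (- dotv w (r i) - z).
  rewrite -[N in t *+ N]card_ord -sumr_const; apply: ler_sum => i _.
  by rewrite ge_max le_max lexx /= le_max lerD2r M_le orbT.
have t_ge0 : 0 <= t by rewrite le_max lexx.
have Mz_le_t : M - z <= t by rewrite le_max lexx orbT.
apply: le_trans Mz_le_t _.
apply: le_trans (ler_wpM2l weight_ge0 t_le).
by rewrite -[t *+ N]mulr_natl mulrA ler_peMl ?weight_mulN_ge1.
Qed.

Lemma cvar_term_le w z : cvar_term r alpha w <= cvar_obj r alpha w z.
Proof.
apply: ge_inf; last by exists z.
exists (- \sum_(j < N) `|dotv w (r j)|) => _ [y _ <-]; apply: cvar_obj_ge => i.
rewrite lerNl opprK (le_trans (ler_norm _)) // (bigD1 i) //= lerDl.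
exact: sumr_ge0.
Qed.

Lemma cvar_term_ge w x : (forall z, x <= cvar_obj r alpha w z) -> x <= cvar_term r alpha w.
Proof.
by move=> x_le; apply: lb_le_inf => [|_ [z _ <-]]; [exists (cvar_obj r alpha w 0), 0|].
Qed.

Lemma cvar_obj_midpoint w0 w1 z0 z1 :
  cvar_obj r alpha (midpoint w0 w1) ((z0 + z1) / 2)
  <= (cvar_obj r alpha w0 z0 + cvar_obj r alpha w1 z1) / 2.
Proof.
rewrite /cvar_obj.
have sum_le : \sum_(i < N) Num.max 0 (- dotv (midpoint w0 w1) (r i) - (z0 + z1) / 2)
  <= (\sum_(i < N) Num.max 0 (- dotv w0 (r i) - z0)
      + \sum_(i < N) Num.max 0 (- dotv w1 (r i) - z1)) / 2.
  rewrite -big_split mulr_suml /=; apply: ler_sum => i _.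
  rewrite dotvZl dotvDl (_ : - _ - _ =
    ((- dotv w0 (r i) - z0) + (- dotv w1 (r i) - z1)) / 2) ?max0_midpoint_le //.
  by field.
have := ler_wpM2l weight_ge0 sum_le; lra.
Qed.

Lemma cvar_term_midpoint w0 w1 :
  2 * cvar_term r alpha (midpoint w0 w1) <= cvar_term r alpha w0 + cvar_term r alpha w1.
Proof.
rewrite -lerBlDr; apply: cvar_term_ge => z0; rewrite lerBlDr -lerBlDl.
apply: cvar_term_ge => z1.
have := cvar_term_le (midpoint w0 w1) ((z0 + z1) / 2).
have := cvar_obj_midpoint w0 w1 z0 z1; lra.
Qed.

End CVaR.

Lemma ler_div_of_sqr_le (R : realFieldType) (a b n : R) :
  0 < a -> 0 <= b -> 0 <= n -> a * n ^+ 2 <= n * b -> n <= b / a.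
Proof.
move=> a_gt0 b_ge0 n_ge0 le_anb; rewrite ler_pdivlMr // mulrC.
have [->|n_neq0] := eqVneq n 0; first by rewrite mulr0.
have n_gt0 : 0 < n by rewrite lt_def n_neq0.
by rewrite -(ler_pM2r n_gt0) -mulrA -expr2 [b * n]mulrC.
Qed.

Section Objective.
Variables (R : realType) (d N : nat) (r : 'I_N -> 'cV[R]_d) (alpha lam_mu gamma : R).
Hypotheses (N_gt0 : (0 < N)%N) (alpha_ge0 : 0 <= alpha) (alpha_lt1 : alpha < 1).
Implicit Types (w : 'cV[R]_d) (mu : 'cV[R]_d) (S : 'M[R]_d).

Local Notation F := (Fobj r alpha lam_mu gamma).

Lemma Fobj_midpoint mu S w0 w1 :
  2 * F mu S (midpoint w0 w1) <= F mu S w0 + F mu S w1 - gamma / 2 * quadf S (w0 - w1).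
Proof.
have := cvar_term_midpoint r N_gt0 alpha_ge0 alpha_lt1 w0 w1.
have := congr1 (fun t => gamma * t) (quadf_midpoint S w0 w1).
by rewrite /Fobj dotvZr dotvDr /= => *; lra.
Qed.

Lemma subr_Fobj mu0 mu1 S0 S1 w :
  F mu1 S1 w - F mu0 S0 w = - lam_mu * dotv (mu1 - mu0) w + gamma * quadf (S1 - S0) w.
Proof. by rewrite /Fobj dotvBl quadfB; ring. Qed.

Lemma minimizers_sqr_dist_le (l u wprev : 'cV[R]_d) (tau lam : R) mu0 mu1 S0 S1 w0 w1 :
  0 <= gamma -> loewner_ge_scalar S0 lam -> psd S1 ->
  is_minimizer r alpha lam_mu gamma l u wprev tau mu0 S0 w0 ->
  is_minimizer r alpha lam_mu gamma l u wprev tau mu1 S1 w1 ->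
  gamma * lam / 2 * dotv (w1 - w0) (w1 - w0)
  <= lam_mu * dotv (mu1 - mu0) (w1 - w0) - gamma * (quadf (S1 - S0) w1 - quadf (S1 - S0) w0).
Proof.
move=> gamma_ge0 S0_ge S1_psd [feas0 min0] [feas1 min1].
have feas_mid := feasible_midpoint feas1 feas0.
have := min0 _ feas_mid; have := min1 _ feas_mid.
have := Fobj_midpoint mu0 S0 w1 w0; have := Fobj_midpoint mu1 S1 w1 w0.
have := subr_Fobj mu0 mu1 S0 S1 w0; have := subr_Fobj mu0 mu1 S0 S1 w1.
have := mulr_ge0 gamma_ge0 (S0_ge (w1 - w0)); rewrite quadfB quadf_scalar.
have := mulr_ge0 gamma_ge0 (S1_psd (w1 - w0)).
by rewrite [dotv (mu1 - mu0) (w1 - w0)]dotvBr => *; lra.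
Qed.

Lemma minimizers_dist_le (l u wprev : 'cV[R]_d) (tau lam : R) mu0 mu1 S0 S1 w0 w1 :
  0 < gamma -> 0 <= lam_mu -> 0 < lam -> loewner_ge_scalar S0 lam -> psd S1 ->
  is_minimizer r alpha lam_mu gamma l u wprev tau mu0 S0 w0 ->
  is_minimizer r alpha lam_mu gamma l u wprev tau mu1 S1 w1 ->
  norm2 (w1 - w0) <=
    (lam_mu * norm2 (mu1 - mu0) + 2 * gamma * box_norm1_bound l u * opnorm (S1 - S0)) * d%:R
    / (gamma * lam / 2).
Proof.
move=> gamma_gt0 lam_mu_ge0 lam_gt0 S0_ge S1_psd min0 min1.
have := minimizers_sqr_dist_le (ltW gamma_gt0) S0_ge S1_psd min0 min1.
have [[feas0 _] [feas1 _]] := (min0, min1).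
rewrite -sqr_norm2; set n := norm2 (w1 - w0); set dmu := mu1 - mu0; set dS := S1 - S0.
set K := box_norm1_bound l u.
have n_ge0 : 0 <= n by apply: sqrtr_ge0.
have e_norm1 : norm1 (w1 - w0) <= d%:R * n by apply: norm1_le_norm2.
have mu_term : dotv dmu (w1 - w0) <= norm2 dmu * (d%:R * n).
  rewrite (le_trans (ler_norm _)) // (le_trans (abs_dotv_le _ _)) //.
  by rewrite ler_wpM2l ?sqrtr_ge0.
have Sigma_term : - (quadf dS w1 - quadf dS w0) <= (K + K) * opnorm dS * (d%:R * n).
  rewrite (le_trans (ler_norm _)) // normrN (le_trans (abs_subr_quadf_le _ _ _)) //.
  rewrite ler_pM ?mulr_ge0 ?addr_ge0 ?norm1_ge0 ?opnorm_ge0 // ler_pM ?addr_ge0 ?norm1_ge0 //;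
  by [exact: opnorm_ge0 | exact: lerD (feasible_norm1_le feas1) (feasible_norm1_le feas0)].
have := ler_wpM2l lam_mu_ge0 mu_term; have := ler_wpM2l (ltW gamma_gt0) Sigma_term.
move=> *; apply: ler_div_of_sqr_le n_ge0 _; last by lra.
- by rewrite divr_gt0 ?mulr_gt0.
- rewrite mulr_ge0 ?addr_ge0 ?mulr_ge0 ?sqrtr_ge0 ?ler0n ?opnorm_ge0 ?box_norm1_bound_ge0 //.
  exact: ltW.
Qed.

End Objective.

Theorem mainTheorem4 (R : realType) (d N : nat) (r : 'I_N -> 'cV[R]_d)
  (alpha lam_mu gamma : R) (l u wprev : 'cV[R]_d) (tau : R)
  (muhat : 'cV[R]_d) (Sigmahat : 'M[R]_d) (lam_min : R) :
  (0 < d)%N -> (0 < N)%N ->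
  0 < alpha < 1 -> 0 <= lam_mu -> 0 < gamma ->
  (forall i, l i 0 <= u i 0) -> 0 <= tau ->
  (exists w, feasible l u wprev tau w) ->
  is_symm Sigmahat -> 0 < lam_min -> loewner_ge_scalar Sigmahat lam_min ->
  exists c_mu c_Sigma : R, 0 <= c_mu /\ 0 <= c_Sigma /\
    forall (dmu : 'cV[R]_d) (dSigma : 'M[R]_d),
      is_symm dSigma -> psd (Sigmahat + dSigma) ->
      forall w1 w0 : 'cV[R]_d,
        is_minimizer r alpha lam_mu gamma l u wprev tau (muhat + dmu) (Sigmahat + dSigma) w1 ->
        is_minimizer r alpha lam_mu gamma l u wprev tau muhat Sigmahat w0 ->
        norm2 (w1 - w0) <= (c_mu * norm2 dmu + c_Sigma * opnorm dSigma) / lam_min.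
Proof.
move=> _ N_gt0 /andP[alpha_gt0 alpha_lt1] lam_mu_ge0 gamma_gt0 _ _ _ _ lam_min_gt0 Sigmahat_ge.
set K := box_norm1_bound l u.
have K_ge0 : 0 <= K by apply: box_norm1_bound_ge0.
exists (2 * d%:R * lam_mu / gamma), (4 * d%:R * K).
split; first by rewrite divr_ge0 ?mulr_ge0 ?ler0n ?(ltW gamma_gt0).
split; first by rewrite !mulr_ge0 ?ler0n.
move=> dmu dSigma _ Sigma1_psd w1 w0 min1 min0.
have := minimizers_dist_le N_gt0 (ltW alpha_gt0) alpha_lt1 gamma_gt0 lam_mu_ge0 lam_min_gt0
  Sigmahat_ge Sigma1_psd min0 min1.
rewrite [muhat + _]addrC [Sigmahat + _]addrC !addrK.
have -> // : (lam_mu * norm2 dmu + 2 * gamma * K * opnorm dSigma) * d%:R / (gamma * lam_min / 2)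
    = (2 * d%:R * lam_mu / gamma * norm2 dmu + 4 * d%:R * K * opnorm dSigma) / lam_min.
by field; rewrite !gt_eqF.
Qed.
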